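(* Let $(\Lambda,\ell)$ be a critical map, $U$ a simply connected region with flat chart $Z:U\to\mathbb{C}$, and $z_0\in\Lambda_0$ a base vertex. For every discrete holomorphic function $f$ on $\Lambda$ in $U$, one has $df=f'\,dZ$, that is, for every edge $(x,y)$ of the diamond $\Diamond$ in $U$, $f(y)-f(x)=\frac{f'(x)+f'(y)}{2}\,(Z(y)-Z(x))$.
   Context: $\Lambda=\Gamma\sqcup\Gamma^*$ is a cellular decomposition and its Poincaré dual; the diamond $\Diamond$ has vertices $\Lambda_0$ and faces the quadrilaterals $(x,y,x',y')$ for each edge $(x,x')\in\Gamma_1$ with dual $(y,y')$; its edges join $x\in\Gamma_0$ to $y\in\Gamma^*_0$. The map is critical: with respect to a flat metric with conic singularities, each face of $\Diamond$ is realized as a Euclidean rhombus of common side length $\delta$, with diagonals the dual edges, orthogonal, forming a direct basis, and $\rho(e)=\ell(e^* )/\ell(e)$. The flat chart $Z$ is an orientation-preserving isometric coordinate on $U$ (no conic singularities inside), giving positions $Z(v)$ of the vertices. $f$ is discrete holomorphic if $f(y')-f(y)=i\rho(x,x')(f(x')-f(x))$ for dual edges $(x,x'),(y,y')$. For a function $g$ on $\Lambda_0$, the 1-form $g\cdot dZ$ on $\Diamond$ is $\int_{(u,v)}g\cdot dZ=\frac{g(u)+g(v)}{2}(Z(v)-Z(u))$. Set $\varepsilon=+1$ on $\Gamma_0$, $-1$ on $\Gamma^*_0$, $f^\dagger:=\varepsilon\bar f$, and $f'(z):=\frac{4}{\delta^2}\bigl(\int_{z_0}^z f^\dagger\,dZ\bigr)^\dagger$,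 where the integral is taken along any path in $\Diamond$ from $z_0$ to $z$ (for holomorphic $f$ it is path independent, and $f^\dagger$, $f'$ are holomorphic). *)

From HB Require Import structures.
From mathcomp Require Import all_boot all_order all_algebra.
From mathcomp Require Import complex.
From Stdlib Require Import Relations.

Set Implicit Arguments.
Unset Strict Implicit.
Unset Printing Implicit Defensive.

Import Order.TTheory GRing.Theory Num.Theory Num.Def.
Local Open Scope ring_scope.

(* Combinatorial data of the diamond graph of a map Lambda = Gamma + Gamma^*.
   V : vertices Lambda_0 ; F : faces of the diamond.
   [primal v] : v is in Gamma_0 (else in Gamma^*_0).
   A face t is the quadrilateral (qx t, qy t, qx' t, qy' t) = (x, y, x', y'),
   where (x, x') is an edge of Gamma with dual edge (y, y'). *)
Record quad_map (V F : Type) := QuadMap {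
  primal : V -> bool;
  qx  : F -> V;
  qy  : F -> V;
  qx' : F -> V;
  qy' : F -> V
}.

Section Diamond.
Variables (V F : Type) (D : quad_map V F).

Definition diamond_wf : Prop :=
  forall t : F, [/\ primal D (qx D t), primal D (qx' D t),
                    ~~ primal D (qy D t) & ~~ primal D (qy' D t)].

Definition in_region (U : F -> Prop) (v : V) : Prop :=
  exists2 t, U t & [\/ v = qx D t, v = qy D t, v = qx' D t | v = qy' D t].

Definition dadj (U : F -> Prop) (u v : V) : Prop :=
  exists2 t, U t &
    [\/ (u = qx D t /\ v = qy D t) \/ (v = qx D t /\ u = qy D t),
        (u = qy D t /\ v = qx' D t) \/ (v = qy D t /\ u = qx' D t),
        (u = qx' D t /\ v = qy' D t) \/ (v = qx' D t /\ u = qy' D t) |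
        (u = qy' D t /\ v = qx D t) \/ (v = qy' D t /\ u = qx D t)].

Fixpoint dpath (U : F -> Prop) (z : V) (l : seq V) : Prop :=
  match l with
  | [::] => True
  | v :: l' => dadj U z v /\ dpath U v l'
  end.

Definition face_loop (t : F) (a b c d : V) : Prop :=
  let x := qx D t in let y := qy D t in
  let x' := qx' D t in let y' := qy' D t in
  [\/ (a, b, c, d) = (x, y, x', y'), (a, b, c, d) = (y, x', y', x),
      (a, b, c, d) = (x', y', x, y) | (a, b, c, d) = (y', x, y, x')] \/
  [\/ (a, b, c, d) = (x, y', x', y), (a, b, c, d) = (y', x', y, x),
      (a, b, c, d) = (x', y, x, y') | (a, b, c, d) = (y, x, y', x')].

Inductive hstep (U : F -> Prop) : seq V -> seq V -> Prop :=
| hs_back l1 l2 u v : dadj U u v ->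
    hstep U (l1 ++ u :: l2) (l1 ++ [:: u, v, u & l2])
| hs_face l1 l2 t a b c d : U t -> face_loop t a b c d ->
    hstep U (l1 ++ a :: l2) (l1 ++ [:: a, b, c, d, a & l2]).

Definition homotopic (U : F -> Prop) : seq V -> seq V -> Prop :=
  clos_refl_sym_trans _ (hstep U).

Definition simply_connected (U : F -> Prop) : Prop :=
  [/\ exists t, U t,
      (forall u v, in_region U u -> in_region U v ->
         exists2 l, dpath U u l & last u l = v) &
      (forall z l, in_region U z -> dpath U z l -> last z l = z ->
         homotopic U (z :: l) [:: z])].

Variable R : rcfType.
Local Notation C := R[i].

(* critical flat chart Z on U: each face of U is a Euclidean rhombus of
   side delta, whose diagonals (Z x' - Z x, Z y' - Z y) are orthogonal
   and form a direct basis *)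
Definition critical_chart (U : F -> Prop) (Z : V -> C) (delta : R) : Prop :=
  0 < delta /\
  forall t, U t ->
    let x := Z (qx D t) in let y := Z (qy D t) in
    let x' := Z (qx' D t) in let y' := Z (qy' D t) in
    [/\ `|y - x| = (delta%:C)%C, `|x' - y| = (delta%:C)%C,
        `|y' - x'| = (delta%:C)%C & `|x - y'| = (delta%:C)%C] /\
    ('Re ((x' - x)^* * (y' - y)) = 0 /\ 0 < 'Im ((x' - x)^* * (y' - y))).

Definition rho (Z : V -> C) (t : F) : C :=
  `|Z (qy' D t) - Z (qy D t)| / `|Z (qx' D t) - Z (qx D t)|.

Definition dholomorphic (U : F -> Prop) (Z : V -> C) (f : V -> C) : Prop :=
  forall t, U t ->
    f (qy' D t) - f (qy D t) = 'i * rho Z t * (f (qx' D t) - f (qx D t)).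

Definition eps (v : V) : C := if primal D v then 1 else -1.

Definition dagger (f : V -> C) : V -> C := fun v => eps v * (f v)^*.

Fixpoint dintegral (g Z : V -> C) (z : V) (l : seq V) : C :=
  match l with
  | [::] => 0
  | v :: l' => (g z + g v) / 2 * (Z v - Z z) + dintegral g Z v l'
  end.

Definition fprime (Z : V -> C) (delta : R) (f : V -> C) (z0 : V) (l : seq V) : C :=
  4 / ((delta%:C)%C ^+ 2) * dagger (fun _ => dintegral (dagger f) Z z0 l) (last z0 l).

End Diamond.

(* The 1-form f^dagger dZ is closed: on each rhombus its integral around the boundary
   vanishes, because f^dagger is again discrete holomorphic and the dual diagonal is the
   primal one rotated by i rho.  On a simply connected region the integral along a loop
   is then invariant under elementary homotopies, hence zero, so F := int_{z0} f^dagger dZ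
   satisfies F(y) - F(x) = (f^dagger(x) + f^dagger(y))/2 (Z y - Z x) along every diamond
   edge.  Since eps flips sign along an edge and conj (Z y - Z x) = delta^2 / (Z y - Z x),
   applying dagger to this identity gives df = f' dZ. *)
From HB Require Import structures.
From mathcomp Require Import all_boot all_order all_algebra.
From mathcomp Require Import complex.
From mathcomp Require Import ring.

Set Implicit Arguments.
Unset Strict Implicit.
Unset Printing Implicit Defensive.

Import Order.TTheory GRing.Theory Num.Theory Num.Def.
Local Open Scope ring_scope.

Lemma direct_orthogonal_rotation (C : numClosedFieldType) (A B : C) :
  'Re (A^* * B) = 0 -> 0 < 'Im (A^* * B) -> B = 'i * (`|B| / `|A|) * A.
Proof.
move=> hRe hIm; set w := A^* * B.
have ew : w = 'i * 'Im w by rewrite {1}[w]Crect hRe add0r.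
have nw : `|w| = 'Im w by rewrite {1}ew normrM normCi mul1r ger0_norm // ltW.
have nwAB : `|w| = `|A| * `|B| by rewrite /w normrM norm_conjC.
have nA0 : `|A| != 0.
  by apply: contraTneq hIm => nA0; rewrite -nw nwAB nA0 mul0r ltxx.
have key : `|A| ^+ 2 * B = 'i * (`|A| * `|B|) * A.
  rewrite normCK; transitivity (A * w); first by rewrite /w mulrA.
  by rewrite ew -nw nwAB; ring.
by apply: (mulfI (expf_neq0 2 nA0)); rewrite key; field.
Qed.

Section DiamondPaths.
Variables (V F : Type) (D : quad_map V F) (R : rcfType).
Local Notation C := R[i].
Implicit Types (U : F -> Prop) (g Z : V -> C) (z : V) (l : seq V).

Lemma dintegral_cat g Z z l1 l2 :
  dintegral g Z z (l1 ++ l2) = dintegral g Z z l1 + dintegral g Z (last z l1) l2.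
Proof. by elim: l1 z => [|v l1 IH] z /=; rewrite ?add0r // IH addrA. Qed.

Lemma dpath_cat U z l1 l2 :
  dpath D U z (l1 ++ l2) <-> dpath D U z l1 /\ dpath D U (last z l1) l2.
Proof. by elim: l1 z => [|v l1 IH] z /=; [tauto | rewrite IH; tauto]. Qed.

Lemma dadj_sym U u v : dadj D U u v -> dadj D U v u.
Proof.
case=> t Ut H; exists t => //.
by case: H => [[]|[]|[]|[]] H; [apply: Or41|apply: Or41|apply: Or42|apply: Or42
  |apply: Or43|apply: Or43|apply: Or44|apply: Or44]; by [left|right].
Qed.

Lemma dpath_reverse U g Z z l : dpath D U z l ->
  exists l', [/\ dpath D U (last z l) l', last (last z l) l' = z &
    dintegral g Z (last z l) l' = - dintegral g Z z l].
Proof.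
elim: l z => [|v l IH] z /=; first by exists [::]; rewrite oppr0.
case=> adj_zv /IH [l' [path_l' last_l' int_l']].
exists (l' ++ [:: z]); rewrite last_cat last_l' dintegral_cat int_l' last_l' /=.
split=> //; last by ring.
by apply/dpath_cat; rewrite last_l'; split=> //=; split=> //; apply: dadj_sym.
Qed.

Definition seq_dintegral g Z (s : seq V) : C :=
  if s is z :: l then dintegral g Z z l else 0.

Lemma seq_dintegral_split g Z l1 a l2 :
  seq_dintegral g Z (l1 ++ a :: l2) =
  seq_dintegral g Z (rcons l1 a) + dintegral g Z a l2.
Proof.
case: l1 => [|h l1] /=; first by rewrite add0r.
by rewrite -cat_rcons dintegral_cat last_rcons.
Qed.

Definition face_closed U g Z :=
  forall t, U t -> forall a b c d, face_loop D t a b c d ->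
    dintegral g Z a [:: b; c; d; a] = 0.

Lemma homotopic_seq_dintegral U g Z s1 s2 :
  face_closed U g Z -> homotopic D U s1 s2 ->
  seq_dintegral g Z s1 = seq_dintegral g Z s2.
Proof.
move=> closed_g; elim=> // [s s' [l1 l2 u v _ | l1 l2 t a b c d Ut loop] |
  s1' s2' s3' _ -> _ -> //].
  by rewrite !seq_dintegral_split /=; ring.
rewrite !seq_dintegral_split (_ : [:: b, c, d, a & l2] = [:: b; c; d; a] ++ l2) //.
by rewrite dintegral_cat (closed_g t Ut a b c d loop) add0r.
Qed.

Lemma dintegral_loop_eq0 U g Z z l :
  simply_connected D U -> face_closed U g Z -> in_region D U z ->
  dpath D U z l -> last z l = z -> dintegral g Z z l = 0.
Proof.
case=> _ _ sc closed_g zU path_l loop_l.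
exact: (homotopic_seq_dintegral closed_g (sc z l zU path_l loop_l)).
Qed.

Lemma dintegral_adjacent U g Z z0 x y px py :
  simply_connected D U -> face_closed U g Z -> in_region D U z0 ->
  dadj D U x y ->
  dpath D U z0 px -> last z0 px = x -> dpath D U z0 py -> last z0 py = y ->
  dintegral g Z z0 py =
  dintegral g Z z0 px + (g x + g y) / 2 * (Z y - Z x).
Proof.
move=> sc closed_g z0U adj_xy path_px last_px path_py last_py.
have [l' [path_l' last_l' int_l']] := dpath_reverse g Z path_py.
rewrite last_py in path_l' last_l' int_l'.
have loop0 : dintegral g Z z0 (px ++ y :: l') = 0.
  apply: dintegral_loop_eq0 sc closed_g z0U _ _; last by rewrite last_cat.
  by apply/dpath_cat; rewrite last_px.
move: loop0; rewrite dintegral_cat last_px /= int_l' => /eqP.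
by rewrite addrA subr_eq0 => /eqP <-.
Qed.

End DiamondPaths.

Section CriticalChart.
Variables (V F : Type) (D : quad_map V F) (R : rcfType).
Variables (U : F -> Prop) (Z : V -> R[i]) (delta : R).
Hypotheses (wf : diamond_wf D) (crit : critical_chart D U Z delta).

Lemma dual_diagonal_rotation t : U t ->
  Z (qy' D t) - Z (qy D t) = 'i * rho D Z t * (Z (qx' D t) - Z (qx D t)).
Proof.
move=> Ut; have /= [_ [hRe hIm]] := crit.2 t Ut.
exact: direct_orthogonal_rotation.
Qed.

Lemma rho_conj t : (rho D Z t)^* = rho D Z t.
Proof. by rewrite /rho conj_Creal // realM ?realV ?normr_real. Qed.

Lemma eps_conj v : (eps D R v)^* = eps D R v.
Proof. by rewrite /eps; case: (primal D v); rewrite ?rmorphN rmorph1. Qed.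

Lemma dagger_conj (f : V -> R[i]) v : (dagger D f v)^* = eps D R v * f v.
Proof. by rewrite rmorphM /= eps_conj conjCK. Qed.

Lemma fprimeE (f : V -> R[i]) z0 l :
  fprime D Z delta f z0 l =
  4 / (delta%:C)%C ^+ 2 * (eps D R (last z0 l) * (dintegral (dagger D f) Z z0 l)^*).
Proof. by []. Qed.

Lemma face_closed_dagger f : dholomorphic D U Z f -> face_closed D U (dagger D f) Z.
Proof.
move=> hol t Ut a b c d loop.
have [px px' py py'] := wf t.
have eZ : Z (qy' D t) = Z (qy D t) + 'i * rho D Z t * (Z (qx' D t) - Z (qx D t)).
  by rewrite -dual_diagonal_rotation // addrC subrK.
have ef : (f (qy' D t))^* =
    (f (qy D t))^* - 'i * rho D Z t * ((f (qx' D t))^* - (f (qx D t))^*).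
  rewrite -[f (qy' D t)](subrK (f (qy D t))) hol //.
  by rewrite rmorphD rmorphM rmorphB rmorphM /= rho_conj conjCi addrC !mulNr.
case: loop => [[]|[]] [-> -> -> ->];
  rewrite /= /dagger /eps px px' (negbTE py) (negbTE py') eZ ef; ring.
Qed.

Lemma dadj_primal x y : dadj D U x y -> primal D x = ~~ primal D y.
Proof.
case=> t _ H; have [px px' py py'] := wf t.
by case: H => [[]|[]|[]|[]] [-> ->]; rewrite ?px ?px' ?(negbTE py) ?(negbTE py').
Qed.

Lemma dadj_norm x y : dadj D U x y -> `|Z y - Z x| = (delta%:C)%C.
Proof.
case=> t Ut H; have [[n1 n2 n3 n4] _] := crit.2 t Ut.
by case: H => [[]|[]|[]|[]] [-> ->]; rewrite // distrC.
Qed.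

End CriticalChart.

Theorem mainTheorem13 (R : rcfType) (V F : Type) (D : quad_map V F)
  (U : F -> Prop) (Z : V -> R[i]) (delta : R) (z0 : V) (f : V -> R[i]) :
  diamond_wf D ->
  critical_chart D U Z delta ->
  simply_connected D U ->
  in_region D U z0 ->
  dholomorphic D U Z f ->
  forall x y : V, dadj D U x y ->
  forall px py : seq V,
    dpath D U z0 px -> last z0 px = x ->
    dpath D U z0 py -> last z0 py = y ->
    f y - f x =
      (fprime D Z delta f z0 px + fprime D Z delta f z0 py) / 2 * (Z y - Z x).
Proof.
move=> wf crit sc z0U hol x y adj_xy px py path_px last_px path_py last_py.
have step := dintegral_adjacent sc (face_closed_dagger wf crit hol) z0U adj_xy
  path_px last_px path_py last_py.
have norm_u := dadj_norm crit adj_xy.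
have delta0 : (delta%:C)%C != 0 :> R[i].
  by rewrite eq_complex /= eqxx andbT gt_eqF // crit.1.
have u0 : Z y - Z x != 0 by rewrite -normr_eq0 norm_u.
have conj_u : (Z y - Z x)^* = (delta%:C)%C ^+ 2 / (Z y - Z x).
  by rewrite -norm_u normCK mulrC mulKf.
rewrite !fprimeE last_px last_py step.
rewrite rmorphD rmorphM rmorphM rmorphD fmorphV /= conjC_nat !dagger_conj conj_u.
rewrite /eps (dadj_primal wf adj_xy); case: (primal D y) => /=;
  by field; rewrite u0 delta0.
Qed.
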